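(* Let $X$ be a d-space, $X_1,X_2\subseteq X$ with $X=\mathrm{Int}(X_1)\cup\mathrm{Int}(X_2)$, the dipaths of $X$ being the finite concatenations of dipaths of $X_1$ and $X_2$, and $X_0=X_1\cap X_2$. For $k=0,1,2$ let $X_k=X_{k,0}\supseteq X_{k,1}\supseteq\dots\supseteq X_{k,n}=A_k$ with functors $P_{k,\ell}:\vec\pi_1(X_k,X_{k,\ell-1})\to\vec\pi_1(X_k,X_{k,\ell})$ be compatible chains of future retracts and past retracts, each of which is an extremal model of $X_k$ (i.e. $\mathrm{Ext}(X_k)\subseteq A_k$) with all $X_{k,\ell}$ compact. Let $A=A_1\cup A_2$ and let $\vec\pi_1(X)\xrightarrow{P_1}\vec\pi_1(X,X_1)\to\dots\xrightarrow{P_n}\vec\pi_1(X,A)$, where $X_\ell=X_{1,\ell}\cup X_{2,\ell}$, be the pushout chain of future and past retracts (with $P_\ell$ the unique functor satisfying $P_\ell\circ j_{k,\ell-1}=j_{k,\ell}\circ P_{k,\ell}$ for $k=1,2$, $j_{k,m}:\vec\pi_1(X_k,X_{k,m})\to\vec\pi_1(X,X_m)$ induced by inclusion). Then this chain is an extremal model of $X$, i.e. $\mathrm{Ext}(X)\subseteq A$.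
   Context: A d-space is a topological space with a set of continuous paths $[0,1]\to X$ (dipaths) containing all constant paths, closed under precomposition with continuous non-decreasing maps $[0,1]\to[0,1]$ and under concatenation; subsets carry the dipaths with image in them. The fundamental category $\vec\pi_1(X)$ has objects the points of $X$ and morphisms $a\to b$ the classes of dipaths from $a$ to $b$ modulo the equivalence relation generated by endpoint-fixing directed homotopies; composition is concatenation. For $A\subseteq X$, $\vec\pi_1(X,A)$ is the full subcategory on objects in $A$; inclusions induce functors. For $A\subseteq B\subseteq X$ with inclusion $\iota:\vec\pi_1(X,A)\to\vec\pi_1(X,B)$, a future retract is a functor $P:\vec\pi_1(X,B)\to\vec\pi_1(X,A)$ left adjoint to $\iota$ whose unit satisfies $\eta_a=\mathrm{id}_a$ for $a\in A$; a past retract is a right adjoint $P$ of $\iota$ whose counit satisfies $\varepsilon_a=\mathrm{id}_a$ for $a\in A$. For a category $\mathcal C$, $x\le y$ iff there is a morphism $x\to y$; $a$ is minimal if $x\le a\Rightarrow x=a$, maximal if $a\le x\Rightarrow x=a$, extremal if either; $\mathrm{Ext}(\mathcal C)$ is the set of extremal objects, $\mathrm{Ext}(X)=\mathrm{Ext}(\vec\pi_1(X))$. An extremal model of a d-space $Y$ is a chain $Y=Y_0\supseteq\dots\supseteq Y_n=A$ with functors $\vec\pi_1(Y,Y_{i-1})\to\vec\pi_1(Y,Y_i)$, each a future or past retract, such that $\mathrm{Ext}(Y)\subseteq A$. Compatible chains: for each $\ell$, $P_{0,\ell},P_{1,\ell},P_{2,\ell}$ are all future retracts or all past retracts; $X_{0,\ell}=X_{1,\ell}\cap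 X_{2,\ell}$; $X_\ell=X_{1,\ell}\cup X_{2,\ell}$ satisfies $X_\ell=\mathrm{Int}_{X_\ell}(X_{1,\ell})\cup\mathrm{Int}_{X_\ell}(X_{2,\ell})$; $P_{k,\ell}\circ i_{k,\ell-1}=i_{k,\ell}\circ P_{0,\ell}$ for $k=1,2$, where $i_{k,m}:\vec\pi_1(X_0,X_{0,m})\to\vec\pi_1(X_k,X_{k,m})$ is induced by inclusion; and units (resp. counits) of $P_{0,\ell}$ map to those of $P_{k,\ell}$ under $\vec\pi_1(X_0)\to\vec\pi_1(X_k)$. *)

From HB Require Import structures.
From mathcomp Require Import all_boot all_order all_algebra.
From mathcomp Require Import all_classical all_reals topology.
From mathcomp Require Import Rstruct Rstruct_topology.
From Stdlib Require Import Relations.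

Set Implicit Arguments.
Unset Strict Implicit.
Unset Printing Implicit Defensive.

Import Order.TTheory GRing.Theory Num.Theory.
Local Open Scope classical_set_scope.
Local Open Scope ring_scope.

Notation RR := Rdefinitions.R.

Definition I01 : set RR := [set t | 0 <= t <= 1].
Definition I01sq : set (RR * RR) := [set st | I01 st.1 /\ I01 st.2].

(* paths [0,1] -> T are represented by functions RR -> T; only values on
   [0,1] matter (see the last axiom of is_dspace). *)
Definition concat (T : Type) (p q : RR -> T) : RR -> T :=
  fun t => if t <= 2^-1 then p (2 * t) else q (2 * t - 1).

Definition const_path (T : Type) (x : T) : RR -> T := fun _ => x.

Definition nondecr_on_I (phi : RR -> RR) : Prop :=
  forall s t, I01 s -> I01 t -> s <= t -> phi s <= phi t.

Definition reparam (phi : RR -> RR) : Prop :=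
  {within I01, continuous phi} /\ (forall t, I01 t -> I01 (phi t)) /\ nondecr_on_I phi.

Definition is_dspace (T : topologicalType) (D : set (RR -> T)) : Prop :=
  [/\ (forall p, D p -> {within I01, continuous p}),
      (forall x : T, D (const_path x)),
      (forall p phi, D p -> reparam phi -> D (p \o phi)),
      (forall p q, D p -> D q -> p 1 = q 0 -> D (concat p q))
    & (forall p q, D p -> (forall t, I01 t -> p t = q t) -> D q)].

Section Dspace.
Variables (T : topologicalType) (D : set (RR -> T)).

Definition dipath_in (S : set T) (p : RR -> T) : Prop :=
  D p /\ (forall t, I01 t -> S (p t)).

(* endpoint-fixing directed homotopy in S from p to q: a d-map
   H : ->I x ->I -> S, H(t,s), with H(.,0)=p, H(.,1)=q, H(0,.), H(1,.) constant *)
Definition dihomotopic0 (S : set T) (p q : RR -> T) : Prop :=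
  dipath_in S p /\ dipath_in S q /\
  exists H : RR * RR -> T,
    [/\ {within I01sq, continuous H},
        (forall st, I01sq st -> S (H st)),
        (forall alpha beta, reparam alpha -> reparam beta ->
              D (fun t => H (alpha t, beta t))),
        (forall s, I01 s -> H (0, s) = p 0 /\ H (1, s) = p 1)
      & (forall t, I01 t -> H (t, 0) = p t /\ H (t, 1) = q t)].

(* equality of morphisms of the fundamental category pi1(S):
   equivalence relation generated by directed homotopies *)
Definition mor_eq (S : set T) : relation (RR -> T) :=
  clos_refl_sym_trans _ (dihomotopic0 S).

(* p represents a morphism a -> b of pi1(S) *)
Definition mor (S : set T) (a b : T) (p : RR -> T) : Prop :=
  dipath_in S p /\ p 0 = a /\ p 1 = b.

Definition dle (S : set T) (x y : T) : Prop := exists p, mor S x y p.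

Definition Ext (S : set T) : set T :=
  [set a | S a /\
     ((forall x, S x -> dle S x a -> x = a) \/ (forall x, S x -> dle S a x -> x = a))].

Definition rel_interior (Y S : set T) : set T :=
  [set x | S x /\ exists U : set T, [/\ open U, U x & U `&` Y `<=` S]].
End Dspace.

(* data of a functor pi1(S,B) -> pi1(S,A) (morphisms represented by dipaths),
   together with a family of morphisms (its unit, resp. counit) *)
Record fdata (T : Type) := FData {
  fobj : T -> T;
  fmor : (RR -> T) -> (RR -> T);
  ftrans : T -> (RR -> T) }.

Section Retracts.
Variables (T : topologicalType) (D : set (RR -> T)).
Local Notation meq := (mor_eq D).
Local Notation mor := (mor D).

Definition is_functor (S B A : set T) (F : fdata T) : Prop :=
  [/\ (forall b, B b -> A (fobj F b)),
      (forall a b p, B a -> B b -> mor S a b p -> mor S (fobj F a) (fobj F b) (fmor F p)),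
      (forall a b p q, B a -> B b -> mor S a b p -> mor S a b q ->
          meq S p q -> meq S (fmor F p) (fmor F q)),
      (forall b, B b -> meq S (fmor F (const_path b)) (const_path (fobj F b)))
    & (forall a b c p q, B a -> B b -> B c -> mor S a b p -> mor S b c q ->
          meq S (fmor F (concat p q)) (concat (fmor F p) (fmor F q)))].

(* future retract: F left adjoint to the inclusion pi1(S,A) -> pi1(S,B),
   with unit eta = ftrans F (adjunction given by its universal arrows),
   and eta_a = id_a for a in A *)
Definition future_retract (S B A : set T) (F : fdata T) : Prop :=
  A `<=` B /\ is_functor S B A F /\
  [/\ (forall b, B b -> mor S b (fobj F b) (ftrans F b)),
      (forall a b p, B a -> B b -> mor S a b p ->
          meq S (concat p (ftrans F b)) (concat (ftrans F a) (fmor F p))),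
      (forall b a f, B b -> A a -> mor S b a f ->
          exists g, [/\ mor S (fobj F b) a g, meq S (concat (ftrans F b) g) f &
            forall g', mor S (fobj F b) a g' -> meq S (concat (ftrans F b) g') f ->
                       meq S g' g])
    & (forall a, A a -> fobj F a = a /\ meq S (ftrans F a) (const_path a))].

(* past retract: F right adjoint to the inclusion, with counit eps = ftrans F,
   and eps_a = id_a for a in A *)
Definition past_retract (S B A : set T) (F : fdata T) : Prop :=
  A `<=` B /\ is_functor S B A F /\
  [/\ (forall b, B b -> mor S (fobj F b) b (ftrans F b)),
      (forall a b p, B a -> B b -> mor S a b p ->
          meq S (concat (fmor F p) (ftrans F b)) (concat (ftrans F a) p)),
      (forall a b f, A a -> B b -> mor S a b f ->
          exists g, [/\ mor S a (fobj F b) g, meq S (concat g (ftrans F b)) f &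
            forall g', mor S a (fobj F b) g' -> meq S (concat g' (ftrans F b)) f ->
                       meq S g' g])
    & (forall a, A a -> fobj F a = a /\ meq S (ftrans F a) (const_path a))].

Definition retract_of (fut : bool) (S B A : set T) (F : fdata T) : Prop :=
  if fut then future_retract S B A F else past_retract S B A F.

Definition extremal_model (Y : set T) (C : nat -> set T) (P : nat -> fdata T) (n : nat) : Prop :=
  [/\ C 0%N = Y,
      (forall l, (l < n)%N -> C l.+1 `<=` C l),
      (forall l, (1 <= l <= n)%N ->
          future_retract Y (C l.-1) (C l) (P l) \/ past_retract Y (C l.-1) (C l) (P l))
    & Ext D Y `<=` C n].

(* compatible chains C k l (k = 0,1,2; l = 0..n), functors PK k l (l = 1..n),
   fut l : the common type (future / past) of the three functors at step l *)
Definition compatible_chains (C : nat -> nat -> set T) (PK : nat -> nat -> fdata T)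
    (fut : nat -> bool) (n : nat) : Prop :=
  [/\ (forall l, (l <= n)%N -> C 0%N l = C 1%N l `&` C 2%N l),
      (forall l, (l <= n)%N ->
          C 1%N l `|` C 2%N l =
          rel_interior (C 1%N l `|` C 2%N l) (C 1%N l)
          `|` rel_interior (C 1%N l `|` C 2%N l) (C 2%N l)),
      (forall k l, (k <= 2)%N -> (1 <= l <= n)%N ->
          retract_of (fut l) (C k 0%N) (C k l.-1) (C k l) (PK k l)),
      (* P_{k,l} o i_{k,l-1} = i_{k,l} o P_{0,l} *)
      (forall k l, (k == 1)%N || (k == 2)%N -> (1 <= l <= n)%N ->
          (forall x, C 0%N l.-1 x -> fobj (PK k l) x = fobj (PK 0%N l) x) /\
          (forall a b p, C 0%N l.-1 a -> C 0%N l.-1 b -> mor (C 0%N 0%N) a b p ->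
              meq (C k 0%N) (fmor (PK k l) p) (fmor (PK 0%N l) p)))
    & (* units (resp. counits) of P_{0,l} map to those of P_{k,l} *)
      (forall k l, (k == 1)%N || (k == 2)%N -> (1 <= l <= n)%N ->
          forall x, C 0%N l.-1 x -> meq (C k 0%N) (ftrans (PK 0%N l) x) (ftrans (PK k l) x))].

Definition dipaths_generated (X1 X2 : set T) : Prop :=
  forall p, D p -> exists s : seq RR,
    [/\ head 0 s = 0, last 0 s = 1, sorted <%R s &
      forall i, (i.+1 < size s)%N ->
        let piece := fun u => p (nth 0 s i + u * (nth 0 s i.+1 - nth 0 s i)) in
        dipath_in D X1 piece \/ dipath_in D X2 piece].
End Retracts.

From HB Require Import structures.
From mathcomp Require Import all_boot all_order all_algebra.
From mathcomp Require Import all_classical all_reals topology.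
From mathcomp Require Import Rstruct Rstruct_topology.

(* The pushout chain consists of future/past retracts by hypothesis, so only
   the inclusion Ext(X) <= A = A_1 u A_2 needs an argument.  A dipath in a
   subspace is a dipath in any larger subspace, so an object that is minimal
   (maximal) in pi1(X) and lies in X_k is still minimal (maximal) in pi1(X_k),
   hence lies in Ext(X_k), which is contained in A_k. *)

Set Implicit Arguments.
Unset Strict Implicit.

Local Open Scope classical_set_scope.

Section ExtremalSubspace.
Variables (T : topologicalType) (D : set (RR -> T)).

Lemma dipath_in_sub (S Y : set T) p :
  S `<=` Y -> dipath_in D S p -> dipath_in D Y p.
Proof. by move=> sSY [Dp pS]; split=> // t /pS /sSY. Qed.

Lemma dle_sub (S Y : set T) x y : S `<=` Y -> dle D S x y -> dle D Y x y.
Proof. by move=> sSY [p [pS pxy]]; exists p; split=> //; exact: dipath_in_sub pS. Qed.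

Lemma Ext_sub (S Y : set T) : S `<=` Y -> Ext D Y `&` S `<=` Ext D S.
Proof.
move=> sSY a [[_ [amin|amax]] Sa]; split=> //; [left|right] => x Sx axS.
- by apply: amin (sSY _ Sx) _; exact: dle_sub axS.
- by apply: amax (sSY _ Sx) _; exact: dle_sub axS.
Qed.

Lemma Ext_setU_cover (X1 X2 : set T) :
  X1 `|` X2 = setT -> Ext D setT `<=` Ext D X1 `|` Ext D X2.
Proof.
move=> cover a Exta; have : (X1 `|` X2) a by rewrite cover.
by case=> Xa; [left|right]; apply: (Ext_sub (subsetT _)); split.
Qed.

End ExtremalSubspace.

Lemma interior_cover_setU (T : topologicalType) (X1 X2 : set T) :
  setT = interior X1 `|` interior X2 -> X1 `|` X2 = setT.
Proof.
move=> cover; apply/seteqP; split=> // x _.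
have : (interior X1 `|` interior X2) x by rewrite -cover.
by case=> /interior_subset; [left|right].
Qed.

Theorem theorem4p9 (T : topologicalType) (D : set (RR -> T)) (X1 X2 : set T)
    (n : nat) (C : nat -> nat -> set T) (PK : nat -> nat -> fdata T)
    (fut : nat -> bool) (P : nat -> fdata T) :
  is_dspace D ->
  [set: T] = interior X1 `|` interior X2 ->
  dipaths_generated D X1 X2 ->
  C 1%N 0%N = X1 -> C 2%N 0%N = X2 -> C 0%N 0%N = X1 `&` X2 ->
  compatible_chains D C PK fut n ->
  (forall k, (k <= 2)%N -> extremal_model D (C k 0%N) (C k) (PK k) n) ->
  (forall k l, (k <= 2)%N -> (l <= n)%N -> compact (C k l)) ->
  (* the pushout chain X_l = X_{1,l} u X_{2,l}, functors P l *)
  (forall l, (1 <= l <= n)%N ->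
     retract_of D (fut l) [set: T] (C 1%N l.-1 `|` C 2%N l.-1) (C 1%N l `|` C 2%N l) (P l) /\
     (forall k, (k == 1)%N || (k == 2)%N ->
        (forall x, C k l.-1 x -> fobj (P l) x = fobj (PK k l) x) /\
        (forall a b p, C k l.-1 a -> C k l.-1 b -> mor D (C k 0%N) a b p ->
            mor_eq D [set: T] (fmor (P l) p) (fmor (PK k l) p)))) ->
  extremal_model D [set: T] (fun l => C 1%N l `|` C 2%N l) P n.
Proof.
move=> _ int_cover _ C10 C20 _ _ models _ pushout.
have X12 : X1 `|` X2 = setT by exact: interior_cover_setU.
have [_ dec1 _ ext1] := models 1%N isT.
have [_ dec2 _ ext2] := models 2%N isT.
split.
- by rewrite C10 C20 X12.
- by move=> l ln x [/(dec1 l ln)|/(dec2 l ln)]; [left|right].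
- by move=> l ln; case: (pushout l ln); rewrite /retract_of; case: (fut l); [left|right].
- move=> a /(Ext_setU_cover X12) [Exta|Exta]; [left; apply: ext1|right; apply: ext2].
  + by rewrite C10.
  + by rewrite C20.
Qed.
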